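(* Let $m\ge 2$. For $1\le l\le m$ let $M_l=\{[i,j]: i\ne j,\ i+j\equiv 2l-1 \pmod{2m}\}$. Each $M_l$ is an SPM of $CK(2m)$, the sets $M_1,\dots,M_m$ are pairwise disjoint, and every blocker $B$ in $CK(2m)$ satisfies $|B\cap M_l|=1$ for every $l=1,\dots,m$. In particular, a blocker contains no two distinct edges that are parallel (i.e., $[i,j],[i',j']$ with $i+j\equiv i'+j'\pmod{2m}$) when these have odd order.
   Context: $CK(2m)$ denotes the complete convex geometric graph whose vertices are the $2m$ vertices of a convex polygon, labelled cyclically $0,1,\dots,2m-1$ (labels modulo $2m$), and whose edges are all straight segments between pairs of vertices. Two edges with four distinct endpoints cross iff their endpoints alternate in the cyclic order. A simple perfect matching (SPM) is a set of $m$ edges that are pairwise disjoint (no common endpoint and no crossing). A blocking set is a set of edges containing at least one edge of every SPM. A blocker is a blocking set with exactly $m$ edges. The order of the edge $[i,i+k]$ ($0<k<2m$) is $\min(k,2m-k)$. *)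

From mathcomp Require Import all_boot.
Set Implicit Arguments. Unset Strict Implicit. Unset Printing Implicit Defensive.

(* Vertices of CK(n) are 'I_n (labels 0..n-1 in cyclic order, n = 2m).
   An edge is a 2-element set of vertices; [set i; j] is the edge [i,j]. *)
Section CK.
Variable n : nat.
Local Notation V := 'I_n.

Definition is_edge (e : {set V}) : bool := #|e| == 2.

(* e = {a,b}, f = {c,d} with a < c < b < d: endpoints alternate
   in the cyclic order (labels are listed cyclically). *)
Definition cross_dir (e f : {set V}) : bool :=
  [exists a : V, exists b : V, exists c : V, exists d : V,
     [&& e == [set a; b], f == [set c; d], (a < c)%N, (c < b)%N & (b < d)%N]].

Definition cross (e f : {set V}) : bool := cross_dir e f || cross_dir f e.

Definition edges_disjoint (e f : {set V}) : bool :=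
  (e :&: f == set0) && ~~ cross e f.

Definition SPM (M : {set {set V}}) : bool :=
  [forall e in M, is_edge e] && (#|M| == n./2) &&
  [forall e in M, forall f in M, (e != f) ==> edges_disjoint e f].

Definition blocking (B : {set {set V}}) : Prop :=
  (forall e, e \in B -> is_edge e) /\
  forall M, SPM M -> exists e, e \in B /\ e \in M.

Definition blocker (B : {set {set V}}) : Prop := blocking B /\ #|B| = n./2.

Definition Ml (l : nat) : {set {set V}} :=
  [set e | [exists i : V, exists j : V,
     [&& e == [set i; j], i != j & (i + j) %% n == (2 * l - 1) %% n]]].

Definition edge_order (i j : V) : nat :=
  let k := (j + n - i) %% n in minn k (n - k).

End CK.

From mathcomp Require Import all_boot zify.

Set Implicit Arguments.
Unset Strict Implicit.
Unset Printing Implicit Defensive.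

(* For odd s = 2l - 1 the edges [i,j] with i + j = s (mod 2m) are the chords
   perpendicular to a fixed direction: every vertex x has exactly one partner
   s - x != x, and two such chords never cross because their sums would differ
   by a number strictly between 0 and 2m.
   The m classes M_1, ..., M_m are disjoint and each must be hit by a blocker
   B, which has only m edges; hence B meets each class exactly once.  An edge
   of odd order has odd vertex sum, so it lies in one of these classes. *)

Lemma card_meet_disjoint_family (T I : finType) (B : {set T}) (P : I -> {set T}) :
  (forall i j, i != j -> [disjoint P i & P j]) ->
  (forall i, exists x, x \in B :&: P i) -> #|B| <= #|I| ->
  forall i, #|B :&: P i| = 1.
Proof.
move=> disjP hitP cardB.
have [g gP] := fin_all_exists hitP.
have gB k : g k \in B by have /setIP[] := gP k.
have gPk k : g k \in P k by have /setIP[] := gP k.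
have g_Pj k j : g k \in P j -> k = j.
  move=> gPj; case: (eqVneq k j) => // /disjP/disjointFr/(_ (gPk k)).
  by rewrite gPj.
have g_inj : injective g by move=> k j gkj; apply: g_Pj; rewrite gkj.
have B_img : B = g @: setT.
  apply/esym/eqP; rewrite eqEcard card_imset // cardsT cardB andbT.
  by apply/subsetP => _ /imsetP[k _ ->].
move=> i; suff -> : B :&: P i = [set g i] by rewrite cards1.
apply/setP => x.
rewrite in_set1 in_setI; apply/andP/eqP => [[] | ->]; last by rewrite gB gPk.
by rewrite B_img => /imsetP[k _ ->] /g_Pj ->.
Qed.

Section ParallelClass.

Variables (n l : nat).
Local Notation V := 'I_n.

Lemma addn_modn_inj (x : nat) (y z : V) : (x + y) %% n = (x + z) %% n -> y = z.
Proof.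
by move/eqP; rewrite eqn_modDl !modn_small // => /eqP/val_inj.
Qed.

Lemma modn_addn_neq (a k : nat) : 0 < k < n -> (a + k) %% n != a %% n.
Proof.
case/andP=> k_gt0 k_lt_n; rewrite -[X in _ != X %% n]addn0 eqn_modDl.
by rewrite mod0n modn_small // -lt0n.
Qed.

Lemma addn_neq_mod_alternating (a b c d : V) :
  a < c -> c < b -> b < d -> (a + b) %% n != (c + d) %% n.
Proof.
move=> ac cb bd; have -> : c + d = a + b + (c + d - (a + b)) by lia.
by rewrite eq_sym modn_addn_neq //; have := ltn_ord d; lia.
Qed.

Lemma mem_Ml e : reflect (exists i j : V,
   [/\ e = [set i; j], i != j & (i + j) %% n = (2 * l - 1) %% n]) (e \in Ml n l).
Proof.
rewrite inE; apply: (iffP existsP).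
  by case=> i /existsP [j /and3P [/eqP -> ? /eqP ?]]; exists i, j.
case=> i [j [-> ? ?]]; exists i; apply/existsP; exists j.
by apply/and3P; split => //; apply/eqP.
Qed.

Lemma Ml_partner e (x : V) : e \in Ml n l -> x \in e ->
  exists y : V, e = [set x; y] /\ (x + y) %% n = (2 * l - 1) %% n.
Proof.
case/mem_Ml => i [j [-> _ h]]; rewrite !inE => /orP [] /eqP ->; first by exists j.
by exists i; rewrite setUC addnC.
Qed.

Lemma Ml_sum e (a b : V) : e \in Ml n l -> e = [set a; b] ->
  (a + b) %% n = (2 * l - 1) %% n.
Proof.
move=> eMl eab; have ae : a \in e by rewrite eab set21.
have [y [ey ay]] := Ml_partner eMl ae.
have : y \in [set a; b] by rewrite -eab ey set22.
rewrite !inE => /pred2P[ya|<- //].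
have : b \in [set a; y] by rewrite -ey eab set22.
by rewrite ya setUid inE => /eqP->; rewrite -{2}ya.
Qed.

Lemma Ml_is_edge e : e \in Ml n l -> is_edge e.
Proof. by case/mem_Ml=> i [j [-> ij _]]; rewrite /is_edge cards2 ij. Qed.

Lemma Ml_no_cross_dir e f : e \in Ml n l -> f \in Ml n l -> ~~ cross_dir e f.
Proof.
move=> eMl fMl; apply/existsP=> -[a /existsP[b /existsP[c /existsP[d]]]].
case/and5P=> /eqP eab /eqP fcd ac cb bd.
have := addn_neq_mod_alternating ac cb bd.
by rewrite (Ml_sum eMl eab) (Ml_sum fMl fcd) eqxx.
Qed.

Lemma Ml_setI_eq0 e f : e \in Ml n l -> f \in Ml n l -> e != f -> e :&: f == set0.
Proof.
move=> eMl fMl; apply: contraNT => /set0Pn[x /setIP[xe xf]].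
have [y [-> xy]] := Ml_partner eMl xe; have [z [-> xz]] := Ml_partner fMl xf.
by rewrite (addn_modn_inj (etrans xy (esym xz))).
Qed.

Lemma Ml_edges_disjoint e f :
  e \in Ml n l -> f \in Ml n l -> e != f -> edges_disjoint e f.
Proof.
move=> eMl fMl ef; rewrite /edges_disjoint /cross (Ml_setI_eq0 eMl fMl ef).
by rewrite (negbTE (Ml_no_cross_dir eMl fMl)) (negbTE (Ml_no_cross_dir fMl eMl)).
Qed.

Hypotheses (n_even : ~~ odd n) (l_gt0 : 0 < l).

(* No vertex is its own partner: x + x is even while 2l - 1 is odd, and
   reduction modulo the even number n preserves parity. *)
Lemma Ml_cover (x : V) : exists2 e, e \in Ml n l & x \in e.
Proof.
have n_gt0 : 0 < n by apply: leq_ltn_trans (ltn_ord x).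
pose y : V := Ordinal (ltn_pmod (2 * l - 1 + (n - x)) n_gt0).
have xy : (x + y) %% n = (2 * l - 1) %% n.
  by rewrite /= modnDmr addnCA subnKC ?modnDr // ltnW.
exists [set x; y]; last exact: set21.
apply/mem_Ml; exists x, y; split=> //; apply/negP=> /eqP xEy.
have odd_mod_n k : odd (k %% n) = odd k by rewrite odd_mod // (negbTE n_even).
move: xy; rewrite -xEy => /(congr1 odd).
by rewrite !odd_mod_n addnn odd_double oddB ?oddM //; lia.
Qed.

Lemma Ml_partition : partition (Ml n l) [set: V].
Proof.
apply/and3P; split.
- apply/eqP/setP=> x; rewrite inE; apply/bigcupP.
  by have [e eMl xe] := Ml_cover x; exists e.
- apply/trivIsetP=> e f eMl fMl ef.
  by rewrite -setI_eq0 (Ml_setI_eq0 eMl fMl ef).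
- by apply: contraT; rewrite negbK => /Ml_is_edge; rewrite /is_edge cards0.
Qed.

Lemma card_Ml : #|Ml n l| = n./2.
Proof.
have : #|[set: V]| = #|Ml n l| * 2.
  by apply: card_uniform_partition Ml_partition => e /Ml_is_edge/eqP.
by rewrite cardsT card_ord => n_eq; rewrite [in RHS]n_eq muln2 doubleK.
Qed.

Lemma SPM_Ml : SPM (Ml n l).
Proof.
rewrite /SPM card_Ml eqxx andbT; apply/andP; split.
  by apply/forall_inP=> e /Ml_is_edge.
apply/forall_inP=> e eMl; apply/forall_inP=> f fMl; apply/implyP.
exact: Ml_edges_disjoint.
Qed.

End ParallelClass.

Lemma Ml_disjoint n l l' : 0 < l -> 0 < l' -> 2 * l <= n -> 2 * l' <= n ->
  l != l' -> [disjoint Ml n l & Ml n l'].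
Proof.
move=> l_gt0 l'_gt0 l_le l'_le; apply: contraNT; rewrite -setI_eq0.
case/set0Pn=> e /setIP[/mem_Ml[i [j [eij _ ijl]]] /Ml_sum/(_ eij)].
by rewrite ijl !modn_small; lia.
Qed.

Lemma odd_edge_order n (i j : 'I_n) : ~~ odd n -> odd (edge_order i j) = odd (i + j).
Proof.
move=> /negbTE n_odd; rewrite /edge_order.
have n_gt0 : 0 < n by apply: leq_ltn_trans (ltn_ord i).
set k := (j + n - i) %% n.
have odd_k : odd k = odd (i + j).
  rewrite /k odd_mod // oddB; last by have := ltn_ord i; lia.
  by rewrite !oddD n_odd addbF addbC.
have odd_nk : odd (n - k) = odd k by rewrite oddB ?n_odd // ltnW ?ltn_pmod.
by rewrite /minn; case: ifP; rewrite ?odd_nk odd_k.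
Qed.

Lemma set2_in_Ml_odd n (i j : 'I_n) : ~~ odd n -> i != j -> odd (i + j) ->
  [set i; j] \in Ml n ((i + j) %% n)./2.+1.
Proof.
move=> n_even ij odd_ij; apply/mem_Ml; exists i, j; split=> //.
set s := (i + j) %% n.
have odd_s : odd s by rewrite /s odd_mod ?(negbTE n_even).
rewrite -[LHS]modn_mod; congr (_ %% n).
by have := odd_double_half s; rewrite odd_s; lia.
Qed.

Theorem mainTheorem4 (m : nat) (hm : (2 <= m)%N) :
  (forall l, (1 <= l <= m)%N -> SPM (Ml (2 * m) l)) /\
  (forall l l', (1 <= l <= m)%N -> (1 <= l' <= m)%N -> l != l' ->
     [disjoint Ml (2 * m) l & Ml (2 * m) l']) /\
  (forall B : {set {set 'I_(2 * m)}}, blocker B ->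
     forall l, (1 <= l <= m)%N -> #|B :&: Ml (2 * m) l| = 1) /\
  (forall B : {set {set 'I_(2 * m)}}, blocker B ->
     forall i j i' j' : 'I_(2 * m),
       i != j -> i' != j' ->
       [set i; j] \in B -> [set i'; j'] \in B ->
       [set i; j] != [set i'; j'] ->
       (i + j) %% (2 * m) = (i' + j') %% (2 * m) ->
       odd (edge_order i j) -> odd (edge_order i' j') -> False).
Proof.
have n_even : ~~ odd (2 * m) by rewrite oddM.
have spm l : 1 <= l <= m -> SPM (Ml (2 * m) l).
  by case/andP=> l_gt0 _; apply: SPM_Ml.
have dis l l' : 1 <= l <= m -> 1 <= l' <= m -> l != l' ->
    [disjoint Ml (2 * m) l & Ml (2 * m) l'].
  by move=> /andP[? ?] /andP[? ?]; apply: Ml_disjoint; lia.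
have meet1 B : blocker B -> forall l, 1 <= l <= m -> #|B :&: Ml (2 * m) l| = 1.
  case=> -[_ hitB] cardB l hl; have lm : l.-1 < m by lia.
  have ordS (k : 'I_m) : 1 <= k.+1 <= m by have := ltn_ord k; lia.
  have := card_meet_disjoint_family
    (P := fun k : 'I_m => Ml (2 * m) k.+1) _ _ _ (Ordinal lm).
  rewrite /= prednK; last by lia.
  apply.
  - by move=> k k' kk'; apply: dis; rewrite ?ordS ?eqSS.
  - move=> k; have [e [eB eM]] := hitB _ (spm _ (ordS k)).
    by exists e; rewrite inE eB eM.
  - by rewrite cardB card_ord mul2n doubleK.
split; first exact: spm.
split; first exact: dis.
split; first exact: meet1.
move=> B blkB i j i' j' ij ij' ijB ijB' neq sum_eq odd_ij odd_ij'.
rewrite odd_edge_order // in odd_ij; rewrite odd_edge_order // in odd_ij'.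
have ijM := set2_in_Ml_odd n_even ij odd_ij.
have ijM' := set2_in_Ml_odd n_even ij' odd_ij'; rewrite -sum_eq in ijM'.
set l := ((i + j) %% (2 * m))./2.+1 in ijM ijM'.
have hl : 1 <= l <= m by rewrite ltn_half_double -mul2n ltn_pmod //; lia.
have : [set [set i; j]; [set i'; j']] \subset B :&: Ml (2 * m) l.
  by apply/subsetP=> e /set2P[]->; rewrite inE ?ijB ?ijB' ?ijM ?ijM'.
by move/subset_leq_card; rewrite cards2 neq (meet1 B blkB _ hl).
Qed.
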